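(* In the setting below, for every $1\le k\le n$ and every $1\le t\le mn+1$, almost surely $$b(k,t)\le c(k,t)\quad\text{or}\quad \sum_{i=1}^{mn}y_i>Y.$$
   Context: Setting: $m,n$ are positive integers with $n\ge 1200\sqrt m$. A deck of $mn$ cards with $m$ copies of each label $1,\dots,n$ is shuffled uniformly at random. A fixed guessing strategy is used: in round $t=1,\dots,mn$ the Guesser guesses $g_t\in\{1,\dots,n\}$, a function (possibly randomized independently of the deck) of $y_1,\dots,y_{t-1}$, where $y_t\in\{0,1\}$ is the indicator that the $t$-th card has label $g_t$. For a vector $v$, $v_{\le t}:=(v_1,\dots,v_t)$. For $1\le k\le n$, $1\le t\le mn+1$: $a(k,t):=|\{1\le i<t: g_i=k\}|$ and $b(k,t):=|\{1\le i<t: g_i=k,\ y_i=1\}|$ (so $b(k,t)\le m$). It is known that, whenever $a(g_t,t)<mn-\sum_{i=1}^{t-1}y_i$, $$\mathbb{E}(y_t\mid g_{\le t},y_{\le t-1})\le \frac{m-b(g_t,t)}{mn-a(g_t,t)-\sum_{i=1}^{t-1}y_i}.$$ Let $Y:=\lfloor \tfrac16\sqrt m\, n\rfloor$. Let $(z_1,\dots,z_{mn})\in\{0,1\}^{mn}$ be a random vector (on an extension of the probability space), with $c(k,t):=|\{1\le i<t: g_i=k,\ z_i=1\}|$, satisfying almost surely: (a) for all $k,t$: $m-\max\{mn-a(k,t)-Y,0\}\le c(k,t)\le m$; (b) for each $t$, conditioned on $g_{\le t},y_{\le t}$, the coordinates of $z_{\le t}$ are mutually independent and independent from $g_{\le mn},y_{\le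 mn}$; (c) for each $t$, if $a(g_t,t)<mn-Y$ then $\mathbb{E}(z_t\mid g_{\le t},z_{\le t-1})=\frac{m-c(g_t,t)}{mn-a(g_t,t)-Y}$; (d) for each $t$, if $\mathbb{E}(y_t\mid g_{\le t},y_{\le t-1})\le\mathbb{E}(z_t\mid g_{\le t},z_{\le t-1})$ then $y_t\le z_t$. (Such a vector exists.) *)

From HB Require Import structures.
From mathcomp Require Import all_boot all_order all_algebra.
From mathcomp Require Import all_classical all_reals all_analysis.
Set Implicit Arguments. Unset Strict Implicit. Unset Printing Implicit Defensive.
Import Order.TTheory GRing.Theory Num.Theory.
Local Open Scope classical_set_scope.
Local Open Scope ring_scope.

Definition pre (A : Type) (f : nat -> A) (t : nat) : seq A := map f (iota 1 t).

Definition sumb (f : nat -> bool) (t : nat) : nat := (\sum_(1 <= i < t) f i)%N.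

Definition cnt (g : nat -> nat) (k t : nat) : nat := (\sum_(1 <= i < t) (g i == k))%N.

(* b(k,t) (resp. c(k,t)) = |{1 <= i < t : g_i = k, y_i = 1}| *)
Definition cntb (g : nat -> nat) (y : nat -> bool) (k t : nat) : nat :=
  (\sum_(1 <= i < t) ((g i == k) && y i))%N.

Definition base (m n : nat) : seq nat := flatten [seq nseq m k | k <- iota 1 n].

Definition deckseq (T : Type) (m n : nat) (deck : nat -> T -> nat) (w : T) : seq nat :=
  pre (fun t => deck t w) (m * n).

Definition atom (T U : Type) (W : T -> U) (w : T) : set T := [set w' | W w' = W w].

Definition condP (R : realType) (d : measure_display) (T : measurableType d)
  (P : probability T R) (A B : set T) : R :=
  fine (P (A `&` B)) / fine (P B).

(* E(x_t | g_{<=t}, x_{<=t-1}) for a 0/1 variable x_t, evaluated at w,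
   i.e. P(x_t = 1 | (g_{<=t}, x_{<=t-1}) = value at w) *)
Definition condE_past (R : realType) (d : measure_display) (T : measurableType d)
  (P : probability T R) (g : nat -> T -> nat) (x : nat -> T -> bool) (t : nat) (w : T) : R :=
  condP P [set w' | x t w']
    (atom (fun w' => (pre (fun i => g i w') t, pre (fun i => x i w') t.-1)) w).

Definition Ybd (R : realType) (m n : nat) : nat :=
  Num.truncn (Num.sqrt (m%:R : R) * n%:R / 6).

From HB Require Import structures.
From mathcomp Require Import all_boot all_order all_algebra.
From mathcomp Require Import all_classical all_reals all_analysis.
From mathcomp Require Import zify.
Import Order.TTheory GRing.Theory Num.Theory.
Local Open Scope classical_set_scope.
Local Open Scope ring_scope.

(* The heart of the proof is deterministic (section [Domination]): for a
   fixed outcome, induct on t.  A new correct guess of k at a step where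
   b(k,t) = c(k,t) is matched by z_t = 1, because the bound on E(y_t | past)
   with slack sum y <= Y is at most the exact value of E(z_t | past) with
   slack Y (lemma [ratio_le_smaller_slack]) and the coupling (d) applies;
   and once the label has been guessed mn - Y times, property (a) forces
   c(k,t) >= m, while b(k,t) <= m since the deck has only m cards of label k. *)

Lemma prefix_sum_mono (F : nat -> nat) (t u : nat) : (t <= u)%N ->
  (\sum_(1 <= i < t) F i <= \sum_(1 <= i < u) F i)%N.
Proof.
move=> tu; case: (leqP t 1) => t1; first by rewrite big_geq.
by rewrite [X in (_ <= X)%N](@big_cat_nat _ _ _ t) ?leq_addr // ltnW.
Qed.

Lemma cntbS (g : nat -> nat) (x : nat -> bool) (k t : nat) : (0 < t)%N ->
  cntb g x k t.+1 = (cntb g x k t + ((g t == k) && x t))%N.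
Proof. by move=> t0; rewrite /cntb big_nat_recr. Qed.

(* Enlarging the slack subtracted from the denominator enlarges the ratio
   (m - c) / (N - a - slack); this compares the bound on E(y_t | past)
   with the value of E(z_t | past). *)
Lemma ratio_le_smaller_slack (R : realFieldType) (m c N a S Y : nat) :
  (c <= m)%N -> (S <= Y)%N -> (a + Y < N)%N ->
  (m%:R - c%:R) / (N%:R - a%:R - S%:R)
    <= (m%:R - c%:R) / (N%:R - a%:R - Y%:R) :> R.
Proof.
move=> cm SY aYN.
have ->: N%:R - a%:R - Y%:R = (N - a - Y)%N%:R :> R by rewrite -!natrB //; lia.
have ->: N%:R - a%:R - S%:R = (N - a - S)%N%:R :> R by rewrite -!natrB //; lia.
apply: ler_wpM2l; first by rewrite subr_ge0 ler_nat.
by rewrite lef_pV2 ?posrE ?ltr0n ?ler_nat; lia.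
Qed.

Section Domination.
(* A fixed outcome: guesses [gw], indicators [yw], [zw], and the values
   [Ey t], [Ez t] of the two conditional expectations at time t. *)
Variables (R : realFieldType) (m n Y k : nat) (gw : nat -> nat).
Variables (yw zw : nat -> bool) (Ey Ez : nat -> R).

Hypothesis z_hits_range : forall t, (1 <= t <= m * n + 1)%N ->
  (m - (m * n - cnt gw k t - Y) <= cntb gw zw k t <= m)%N.
(* the deck contains only m cards of label k *)
Hypothesis y_hits_le : forall t, (1 <= t <= m * n + 1)%N ->
  (cntb gw yw k t <= m)%N.
Hypothesis Ey_bound : forall t, (1 <= t <= m * n)%N ->
  (cnt gw (gw t) t < m * n - sumb yw t)%N ->
  Ey t <= (m%:R - (cntb gw yw (gw t) t)%:R)
          / ((m * n)%:R - (cnt gw (gw t) t)%:R - (sumb yw t)%:R).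
Hypothesis Ez_value : forall t, (1 <= t <= m * n)%N ->
  (cnt gw (gw t) t < m * n - Y)%N ->
  Ez t = (m%:R - (cntb gw zw (gw t) t)%:R)
         / ((m * n)%:R - (cnt gw (gw t) t)%:R - Y%:R).
Hypothesis coupling : forall t, (1 <= t <= m * n)%N ->
  Ey t <= Ez t -> (yw t <= zw t)%N.
Hypothesis few_correct : (sumb yw (m * n + 1) <= Y)%N.

Lemma domination_step t : (1 <= t <= m * n)%N ->
  (cntb gw yw k t <= cntb gw zw k t)%N ->
  (cntb gw yw k t.+1 <= cntb gw zw k t.+1)%N.
Proof.
move=> tmn IH; rewrite !cntbS; try lia.
have [gk|_] := eqVneq (gw t) k; last by rewrite !addn0.
case ey: (yw t); last by rewrite addn0 (leq_trans IH) ?leq_addr.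
case: (ltnP (cntb gw yw k t) (cntb gw zw k t)) => [lt|ge].
  by rewrite addn1 (leq_trans lt) ?leq_addr.
have bc : cntb gw yw k t = cntb gw zw k t by apply/eqP; rewrite eqn_leq IH.
case: (ltnP (cnt gw k t) (m * n - Y)) => aY.
- (* enough budget left: the coupling forces z_t = 1 *)
  have SY : (sumb yw t <= Y)%N.
    by apply: leq_trans few_correct; apply: prefix_sum_mono; lia.
  have cm : (cntb gw zw k t <= m)%N by case/andP: (z_hits_range t ltac:(lia)).
  have EyEz : Ey t <= Ez t.
    rewrite (Ez_value t tmn); last by rewrite gk.
    apply: le_trans (Ey_bound t tmn _) _; first by rewrite gk; lia.
    by rewrite gk bc; apply: ratio_le_smaller_slack => //; lia.
  by have := coupling t tmn EyEz; rewrite ey bc; case: (zw t).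
- (* label k guessed mn - Y times: c(k,t) is already saturated at m *)
  have cm : (m <= cntb gw zw k t)%N.
    have := z_hits_range t ltac:(lia).
    have -> : (m * n - cnt gw k t - Y = 0)%N by lia.
    by rewrite subn0 => /andP[].
  have := y_hits_le t.+1 ltac:(lia); rewrite cntbS ?gk ?eqxx ?ey; last by lia.
  by move=> bm; rewrite (leq_trans bm) ?(leq_trans cm) ?leq_addr.
Qed.

Lemma domination t : (t <= m * n + 1)%N -> (cntb gw yw k t <= cntb gw zw k t)%N.
Proof.
elim: t => [|t IH] tle; first by rewrite /cntb !big_geq.
case: (posnP t) => [->|t0]; first by rewrite /cntb !big_geq.
by apply: domination_step; [lia | apply: IH; lia].
Qed.

End Domination.

Lemma count_base (m n k : nat) : (count (pred1 k) (base m n) <= m)%N.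
Proof.
rewrite /base count_flatten -map_comp.
have -> : forall s : seq nat,
    sumn [seq (count (pred1 k) \o (fun j => nseq m j)) x | x <- s]
    = (count (pred1 k) s * m)%N.
  by elim=> [|a s IH] //=; rewrite count_nseq IH mulnDl.
have := count_uniq_mem k (iota_uniq 1 n).
by case: (k \in _) => ->; rewrite ?mul1n ?mul0n.
Qed.

Lemma hits_le_copies (m n k : nat) (deck gw : nat -> nat) (yw : nat -> bool) :
  perm_eq (pre deck (m * n)) (base m n) ->
  (forall t, yw t = (deck t == gw t)) ->
  forall t, (t <= m * n + 1)%N -> (cntb gw yw k t <= m)%N.
Proof.
move=> pe yE t tle.
apply: (@leq_trans (\sum_(1 <= i < t) (deck i == k))%N).
  by rewrite /cntb; apply: leq_sum => i _; rewrite yE; case: eqP => // ->; case: eqP.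
apply: (@leq_trans (\sum_(1 <= i < m * n + 1) (deck i == k))%N).
  exact: prefix_sum_mono.
apply: leq_trans (count_base m n k).
rewrite -(permP pe) count_map -sum1_count [X in (_ <= X)%N]big_mkcond.
rewrite /index_iota addnK; apply: eq_leq; apply: eq_bigr => i _ /=.
by case: (deck i == k).
Qed.

Section Measurability.
Context {d : measure_display} {T : measurableType d}.

Lemma measurable_pre_eq (f : nat -> T -> nat) (N : nat) (s : seq nat) :
  (forall t v, measurable [set w | f t w = v]) ->
  measurable [set w | pre (fun t => f t w) N = s].
Proof.
move=> mf; have [sN|sN] := eqVneq (size s) N; last first.
  suff -> : [set w | pre (fun t => f t w) N = s] = set0 by [].
  by apply/seteqP; split => w //= pw; move: sN; rewrite -pw size_map size_iota eqxx.
suff -> : [set w | pre (fun t => f t w) N = s]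
        = \bigcap_(i in [set i | (i < N)%N]) [set w | f i.+1 w = nth 0%N s i].
  by apply: bigcap_measurableType => i _; exact: mf.
apply/seteqP; split => w /=.
  by move=> <- i /= iN; rewrite (nth_map 0%N) ?size_iota // nth_iota.
move=> fs; apply: (@eq_from_nth _ 0%N); first by rewrite size_map size_iota.
move=> i; rewrite size_map size_iota => iN.
by rewrite (nth_map 0%N) ?size_iota // nth_iota // add1n; apply: fs.
Qed.

(* The event that the deck is a permutation of the multiset is measurable,
   as a finite union of level sets of the deck sequence. *)
Lemma measurable_deck_perm (m n : nat) {deck : nat -> T -> nat} :
  (forall t v, measurable [set w | deck t w = v]) ->
  measurable [set w | perm_eq (deckseq m n deck w) (base m n)].
Proof.
move=> mdeck; set ps := permutations (base m n).
suff -> : [set w | perm_eq (deckseq m n deck w) (base m n)]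
        = \bigcup_(i in [set i | (i < size ps)%N])
            [set w | deckseq m n deck w = nth [::] ps i].
  by apply: bigcup_measurable => i _; exact: measurable_pre_eq.
apply/seteqP; split => w.
  move=> pw; have : deckseq m n deck w \in ps by rewrite mem_permutations.
  by case/(nthP [::]) => i ips Ei; exists i.
move=> [i ips Ei]; have : deckseq m n deck w \in ps by rewrite Ei mem_nth.
by rewrite mem_permutations.
Qed.

Lemma ae_prob1 {R : realType} (P : probability T R) {S : set T} :
  measurable S -> P S = 1%E -> {ae P, forall w, S w}.
Proof.
move=> mS PS; exists (~` S); split => //; first exact: measurableC.
by rewrite probability_setC // PS subee.
Qed.

End Measurability.

Lemma near_forall_range {T : Type} {F : set_system T} {FF : Filter F}
  {N : nat} {Q : nat -> T -> Prop} :
  (forall t, (1 <= t <= N)%N -> \forall w \near F, Q t w) ->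
  \forall w \near F, forall t, (1 <= t <= N)%N -> Q t w.
Proof.
move=> HQ.
have HQ_ord : \forall w \near F, forall i : 'I_N.+1, (1 <= i <= N)%N -> Q i w.
  apply: filter_forall => i; case: (boolP (1 <= i <= N)%N) => iN.
    by apply: filterS (HQ i iN) => w Qw _.
  exact: nearW.
apply: filterS HQ_ord => w Hw t tN.
have tN1 : (t < N.+1)%N by lia.
exact: (Hw (Ordinal tN1) tN).
Qed.

Theorem lemma2p6 (R : realType) (d : measure_display) (T : measurableType d)
  (P : probability T R)
  (d' : measure_display) (Rnd : measurableType d')
  (m n : nat)
  (deck g : nat -> T -> nat) (y z : nat -> T -> bool)
  (rnd : T -> Rnd) (strat : nat -> seq bool -> Rnd -> nat) :
  (0 < m)%N -> (0 < n)%N ->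
  1200 * Num.sqrt (m%:R : R) <= n%:R ->
  (* the deck (card labels deck 1, ..., deck (mn)) is uniformly shuffled *)
  (forall t v, measurable [set w | deck t w = v]) ->
  P [set w | perm_eq (deckseq m n deck w) (base m n)] = 1%E ->
  (forall s1 s2, perm_eq s1 (base m n) -> perm_eq s2 (base m n) ->
     P [set w | deckseq m n deck w = s1] = P [set w | deckseq m n deck w = s2]) ->
  (* the guesser's private randomness is independent of the deck *)
  measurable_fun setT rnd ->
  (forall A, measurable A -> forall s,
     P (rnd @^-1` A `&` [set w | deckseq m n deck w = s])
     = (P (rnd @^-1` A) * P [set w | deckseq m n deck w = s])%E) ->
  (* the guessing strategy *)
  (forall t w, (1 <= t <= m * n)%N ->
     g t w = strat t (pre (fun i => y i w) t.-1) (rnd w)) ->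
  (forall t w, (1 <= t <= m * n)%N -> (1 <= g t w <= n)%N) ->
  (forall t v, measurable [set w | g t w = v]) ->
  (forall t w, y t w = (deck t w == g t w)) ->
  (* the known bound on E(y_t | g_{<=t}, y_{<=t-1}) *)
  (forall t, (1 <= t <= m * n)%N ->
     {ae P, forall w,
       (cnt (fun i => g i w) (g t w) t < m * n - sumb (fun i => y i w) t)%N ->
       condE_past P g y t w
       <= ((m%:R - (cntb (fun i => g i w) (fun i => y i w) (g t w) t)%:R)
           / ((m * n)%:R - (cnt (fun i => g i w) (g t w) t)%:R
              - (sumb (fun i => y i w) t)%:R))}) ->
  (* the random vector z *)
  (forall t v, measurable [set w | z t w = v]) ->
  (* (a) *)
  {ae P, forall w, forall k t, (1 <= k <= n)%N -> (1 <= t <= m * n + 1)%N ->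
     (m - (m * n - cnt (fun i => g i w) k t - Ybd R m n)
        <= cntb (fun i => g i w) (fun i => z i w) k t <= m)%N} ->
  (* (b) *)
  (forall t, (1 <= t <= m * n)%N -> forall w0,
     let Wt := atom (fun w => (pre (fun i => g i w) t, pre (fun i => y i w) t)) w0 in
     (0 < P Wt)%E ->
     forall (e : seq bool) (gy : seq nat * seq bool), size e = t ->
       condP P ([set w | pre (fun i => z i w) t = e]
                `&` [set w | (pre (fun i => g i w) (m * n),
                              pre (fun i => y i w) (m * n)) = gy]) Wt
       = (\prod_(i < t) condP P [set w | z i.+1 w = nth false e i] Wt)
         * condP P [set w | (pre (fun i => g i w) (m * n),
                             pre (fun i => y i w) (m * n)) = gy] Wt) ->
  (* (c) *)
  (forall t, (1 <= t <= m * n)%N ->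
     {ae P, forall w,
       (cnt (fun i => g i w) (g t w) t < m * n - Ybd R m n)%N ->
       condE_past P g z t w
       = (m%:R - (cntb (fun i => g i w) (fun i => z i w) (g t w) t)%:R)
         / ((m * n)%:R - (cnt (fun i => g i w) (g t w) t)%:R - (Ybd R m n)%:R)}) ->
  (* (d) *)
  (forall t, (1 <= t <= m * n)%N ->
     {ae P, forall w,
       condE_past P g y t w <= condE_past P g z t w -> (y t w <= z t w)%N}) ->
  (* conclusion *)
  forall k t, (1 <= k <= n)%N -> (1 <= t <= m * n + 1)%N ->
    {ae P, forall w,
      (cntb (fun i => g i w) (fun i => y i w) k t
         <= cntb (fun i => g i w) (fun i => z i w) k t)%N
      \/ (Ybd R m n < sumb (fun i => y i w) (m * n + 1))%N}.
Proof.
move=> _ _ _ mdeck deck_perm1 _ _ _ _ _ _ yE Ey_bound _ z_range _ Ez_value coupling.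
move=> k t kn tr.
have deck_perm := ae_prob1 P (measurable_deck_perm m n mdeck) deck_perm1.
(* [pose proof]/[refine] let typeclass resolution supply the a.e. filter *)
pose proof (filterI deck_perm (filterI z_range (filterI (near_forall_range Ey_bound)
  (filterI (near_forall_range Ez_value) (near_forall_range coupling))))) as all_ae.
refine (filterS _ all_ae).
move=> w [pe [z_range_w [Ey_bound_w [Ez_value_w coupling_w]]]].
case: (leqP (sumb (fun i => y i w) (m * n + 1)) (Ybd R m n)) => few; last by right.
left; apply: (@domination R m n (Ybd R m n) k (fun i => g i w) (fun i => y i w)
  (fun i => z i w) (fun t => condE_past P g y t w) (fun t => condE_past P g z t w)).
- by move=> t' t'r; apply: z_range_w.
- move=> t' /andP[_ t'r].
  by apply: (@hits_le_copies m n k (fun i => deck i w)) t'r => // i; apply: yE.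
- exact: Ey_bound_w.
- exact: Ez_value_w.
- exact: coupling_w.
- exact: few.
- by case/andP: tr.
Qed.
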